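(* For any $n\in\mathbb{N}$ the standing up map $T^n:\mathcal{B}_n\to\Omega$ is a bijection.
   Context: Let $\mathcal{B}$ be the set of $\sigma\in\{-1,+1\}^{\mathbb{Z}}$ for which there exist $a,b\in\mathbb{Z}$ with $\sigma_{a-i}=-1$ and $\sigma_{b+i}=+1$ for all $i\in\mathbb{N}$. For $\sigma\in\mathcal{B}$ let $N(\sigma)=\#\{i\geq1:\sigma_i=-1\}-\#\{i\leq 0:\sigma_i=+1\}$, and $\mathcal{B}_n=\{\sigma\in\mathcal{B}:N(\sigma)=n\}$. Let $\Omega=\{\omega\in\mathbb{Z}_{\geq 0}^{\mathbb{Z}_{<0}} : \exists N>0 \text{ such that } \omega_{-i}=0\ \forall i\geq N\}$. For $\sigma\in\mathcal{B}_n$ let $S_r(\sigma)$ be the site of the $r$-th positive spin of $\sigma$ counted from the left. The standing up map is $T^n(\sigma)=\omega$ with $\omega_{-r}=S_{r+1}(\sigma)-S_r(\sigma)-1$ for $r\in\mathbb{Z}_{>0}$, i.e. $\omega_{-r}$ is the number of negative spins between the $r$-th and $(r+1)$-th positive spins. *)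

(* Spin configurations sigma : Z -> bool, with true = +1, false = -1. *)
From Stdlib Require Import ZArith Ensembles Finite_sets ClassicalEpsilon.
Open Scope Z_scope.

Definition config := Z -> bool.

Definition inB (s : config) : Prop :=
  exists a b : Z, (forall i : nat, s (a - Z.of_nat i) = false) /\
                  (forall i : nat, s (b + Z.of_nat i) = true).

Definition negs_right (s : config) : Ensemble Z := fun i => 1 <= i /\ s i = false.
Definition pos_left (s : config) : Ensemble Z := fun i => i <= 0 /\ s i = true.

Definition N_is (s : config) (n : Z) : Prop :=
  exists k m : nat, cardinal Z (negs_right s) k /\ cardinal Z (pos_left s) m /\
                    Z.of_nat k - Z.of_nat m = n.

Definition inBn (n : Z) (s : config) : Prop := inB s /\ N_is s n.

(* Omega: omega indexed by Z_{<0}, nonnegative integer valued, eventually zero.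
   Represented as Z -> nat, normalised to 0 on the irrelevant indices i >= 0. *)
Definition inOmega (w : Z -> nat) : Prop :=
  (forall i, 0 <= i -> w i = 0%nat) /\
  exists N : Z, N > 0 /\ forall i, i >= N -> w (- i) = 0%nat.

Definition is_S (s : config) (r : nat) (x : Z) : Prop :=
  s x = true /\ cardinal Z (fun i => i <= x /\ s i = true) r.

Definition S (s : config) (r : nat) : Z :=
  epsilon (inhabits 0) (is_S s r).

Definition S_spec (s : config) (r : nat) :
  (exists x, is_S s r x) -> is_S s r (S s r).
Proof. intro H. unfold S. apply epsilon_spec, H. Qed.

(* Standing up map T^n (its formula does not depend on n):
   omega_{-r} = S_{r+1}(s) - S_r(s) - 1 for r >= 1. *)
Definition T (n : Z) (s : config) : Z -> nat :=
  fun i => if i <? 0 then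
             let r := Z.to_nat (- i) in Z.to_nat (S s (r + 1) - S s r - 1)
           else 0%nat.

(* Take a <= 0 < b with s = -1 on (-oo, a] and s = +1 on [b, +oo).  Counting the positive spins
   in windows shows that S_1 < S_2 < ... enumerate the positive spins of s, that they are
   eventually consecutive, and that N(s) = b - #{positive spins in (a, b]} is the
   eventual value of S_r - r.  T records the gaps S_(r+1) - S_r - 1, which therefore vanish
   from some r on.  Knowing the gaps and the charge n recovers every S_r by descending from
   the tail S_r = r + n, so T is injective on B_n; conversely an eventually vanishing gap
   sequence is realised by placing positive spins at its partial sums, shifted so that the
   tail is r + n. *)

From Stdlib Require Import ZArith Ensembles Finite_sets Finite_sets_facts List Lia
  FunctionalExtensionality.
Open Scope Z_scope.

Lemma cardinal_equiv (A B : Ensemble Z) (k : nat) :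
  cardinal Z A k -> (forall x, A x <-> B x) -> cardinal Z B k.
Proof.
  intros HA HAB.
  replace B with A; [exact HA|].
  apply Extensionality_Ensembles; split; intros x Hx; apply HAB, Hx.
Qed.

Fixpoint count_window (f : Z -> bool) (lo : Z) (k : nat) : nat :=
  match k with
  | O => O
  | Datatypes.S k' =>
      Nat.add (count_window f lo k') (Nat.b2n (f (lo + Z.of_nat (Datatypes.S k'))))
  end.

Lemma count_window_succ f lo k : count_window f lo (Datatypes.S k) =
  Nat.add (count_window f lo k) (Nat.b2n (f (lo + Z.of_nat (Datatypes.S k)))).
Proof. reflexivity. Qed.

Lemma cardinal_count_window f lo k :
  cardinal Z (fun i => lo < i <= lo + Z.of_nat k /\ f i = true) (count_window f lo k).
Proof.
  induction k as [|k IH]; [|rewrite count_window_succ].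
  - apply (cardinal_equiv _ _ _ (card_empty Z)).
    intro x; split; [intros []|lia].
  - set (x := lo + Z.of_nat (Datatypes.S k)).
    destruct (f x) eqn:Hx; simpl Nat.b2n.
    + rewrite Nat.add_1_r.
      apply (cardinal_equiv _ _ _ (card_add _ _ _ IH x ltac:(intros [? _]; lia))).
      intro i; split.
      * intros [i' Hi|i' []]; [destruct Hi; split|split]; auto; lia.
      * intros [Hi Hfi]; destruct (Z.eq_dec i x) as [->|ne]; [right; constructor|].
        left; split; auto; lia.
    + rewrite Nat.add_0_r.
      apply (cardinal_equiv _ _ _ IH).
      intro i; split; intros [Hi Hfi]; split; auto; try lia.
      destruct (Z.eq_dec i x) as [->|ne]; [congruence|lia].
Qed.

Lemma count_window_add f lo k m :
  count_window f lo (k + m) =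
  Nat.add (count_window f lo k) (count_window f (lo + Z.of_nat k) m).
Proof.
  induction m as [|m IH].
  - now rewrite !Nat.add_0_r.
  - rewrite Nat.add_succ_r, !count_window_succ, IH.
    replace (lo + Z.of_nat (Datatypes.S (k + m)))
      with (lo + Z.of_nat k + Z.of_nat (Datatypes.S m)) by lia.
    lia.
Qed.

Lemma count_window_negb f lo k :
  (count_window f lo k + count_window (fun i => negb (f i)) lo k)%nat = k.
Proof.
  induction k as [|k IH]; [reflexivity|]. rewrite !count_window_succ.
  destruct (f (lo + Z.of_nat (Datatypes.S k))); simpl; lia.
Qed.

Lemma count_window_all_true f lo k :
  (forall i, lo < i <= lo + Z.of_nat k -> f i = true) -> count_window f lo k = k.
Proof.
  induction k as [|k IH]; intro Hf; [reflexivity|]. rewrite count_window_succ.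
  rewrite IH, Hf by (intros; try apply Hf; lia). simpl; lia.
Qed.

Lemma count_window_reaches f lo k r :
  (1 <= r <= count_window f lo k)%nat ->
  exists j, (j <= k)%nat /\ f (lo + Z.of_nat j) = true /\ count_window f lo j = r.
Proof.
  induction k as [|k IH]; intro Hr; [simpl in Hr; lia|]. rewrite count_window_succ in Hr.
  destruct (Nat.le_gt_cases r (count_window f lo k)) as [Hle|Hgt].
  - destruct IH as [j Hj]; [lia|]. exists j; intuition lia.
  - exists (Datatypes.S k).
    destruct (f (lo + Z.of_nat (Datatypes.S k))) eqn:Hf; simpl Nat.b2n in Hr; [|lia].
    rewrite count_window_succ, Hf. simpl Nat.b2n. split; [lia|split; [reflexivity|lia]].
Qed.

Definition count_upto (s : config) (a x : Z) : nat := count_window s a (Z.to_nat (x - a)).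

Lemma count_upto_add s a x y : a <= x <= y ->
  count_upto s a y = Nat.add (count_upto s a x) (count_window s x (Z.to_nat (y - x))).
Proof.
  intro H. unfold count_upto.
  replace (Z.to_nat (y - a)) with (Z.to_nat (x - a) + Z.to_nat (y - x))%nat by lia.
  rewrite count_window_add. do 3 f_equal. lia.
Qed.

Lemma count_upto_mono s a x y : a <= x <= y -> (count_upto s a x <= count_upto s a y)%nat.
Proof. intro H. rewrite (count_upto_add s a x y H). lia. Qed.

Lemma count_upto_lt s a x y : a <= x < y -> s y = true ->
  (count_upto s a x < count_upto s a y)%nat.
Proof.
  intros H Hy. rewrite (count_upto_add s a x y) by lia.
  replace (Z.to_nat (y - x)) with (Datatypes.S (Z.to_nat (y - x - 1))) by lia.
  rewrite count_window_succ.
  replace (x + Z.of_nat (Datatypes.S (Z.to_nat (y - x - 1)))) with y by lia.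
  rewrite Hy. simpl; lia.
Qed.

Section Frame.

Variables (s : config) (a b : Z).
Hypotheses (neg_below : forall y, y <= a -> s y = false)
  (pos_above : forall y, b <= y -> s y = true) (a_le_b : a <= b).

Local Notation cnt := (count_upto s a).

Lemma pos_site_gt x : s x = true -> a < x.
Proof.
  intro Hx. destruct (Z_le_gt_dec x a) as [H|H]; [|lia].
  rewrite neg_below in Hx by exact H. discriminate.
Qed.

Lemma cardinal_pos_upto x : cardinal Z (fun i => i <= x /\ s i = true) (cnt x).
Proof.
  apply (cardinal_equiv _ _ _ (cardinal_count_window s a (Z.to_nat (x - a)))).
  intro i; split; intros [Hi Hsi]; split; auto.
  - lia.
  - pose proof (pos_site_gt i Hsi). lia.
Qed.

Lemma is_S_iff r x : is_S s r x <-> s x = true /\ cnt x = r.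
Proof.
  pose proof (cardinal_pos_upto x) as Hcard.
  split; intros [Hx Hr]; split; auto.
  - exact (cardinal_unicity _ _ _ Hcard _ Hr).
  - now subst r.
Qed.

Lemma S_eq_frame r x : is_S s r x -> S s r = x.
Proof.
  intro Hx. assert (HS : is_S s r (S s r)) by (apply S_spec; eauto).
  rewrite is_S_iff in Hx, HS. destruct Hx as [Hx Hcx], HS as [HS HcS].
  pose proof (pos_site_gt _ Hx). pose proof (pos_site_gt _ HS).
  destruct (Z.lt_total (S s r) x) as [Hlt|[Heq|Hlt]]; auto.
  - pose proof (count_upto_lt s a (S s r) x ltac:(lia) Hx). lia.
  - pose proof (count_upto_lt s a x (S s r) ltac:(lia) HS). lia.
Qed.

Lemma count_upto_beyond x : b <= x -> cnt x = Nat.add (cnt b) (Z.to_nat (x - b)).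
Proof.
  intro Hx. rewrite (count_upto_add s a b x) by lia. f_equal.
  apply count_window_all_true. intros i Hi. apply pos_above. lia.
Qed.

Lemma S_spec_frame r : (1 <= r)%nat -> s (S s r) = true /\ cnt (S s r) = r.
Proof.
  intro Hr. rewrite <- is_S_iff. apply S_spec.
  pose proof (count_upto_beyond (b + Z.of_nat r) ltac:(lia)) as Hb.
  destruct (count_window_reaches s a (Z.to_nat (b + Z.of_nat r - a)) r) as [j [_ [Hj Hcj]]].
  { unfold count_upto in Hb. lia. }
  exists (a + Z.of_nat j). apply is_S_iff. split; auto.
  unfold count_upto. now replace (Z.to_nat (a + Z.of_nat j - a)) with j by lia.
Qed.

Lemma S_count_upto x : s x = true -> (1 <= cnt x)%nat /\ S s (cnt x) = x.
Proof.
  intro Hx. pose proof (pos_site_gt x Hx). split.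
  - pose proof (count_upto_lt s a (x - 1) x ltac:(lia) Hx). lia.
  - apply S_eq_frame, is_S_iff. auto.
Qed.

Lemma S_lt_succ r : (1 <= r)%nat -> S s r < S s (r + 1).
Proof.
  intro Hr.
  destruct (S_spec_frame r Hr) as [Hs1 Hc1], (S_spec_frame (r + 1) ltac:(lia)) as [Hs2 Hc2].
  pose proof (pos_site_gt _ Hs2).
  destruct (Z_lt_le_dec (S s r) (S s (r + 1))) as [Hlt|Hle]; auto.
  pose proof (count_upto_mono s a (S s (r + 1)) (S s r) ltac:(lia)). lia.
Qed.

Lemma S_beyond r : (cnt b <= r)%nat -> S s r = Z.of_nat r + (b - Z.of_nat (cnt b)).
Proof.
  intro Hr. apply S_eq_frame, is_S_iff. split.
  - apply pos_above. lia.
  - rewrite count_upto_beyond by lia. lia.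
Qed.

Lemma N_is_frame : a <= 0 -> 1 <= b -> N_is s (b - Z.of_nat (cnt b)).
Proof.
  intros Ha0 Hb1.
  exists (count_window (fun i => negb (s i)) 0 (Z.to_nat b)),
    (count_window s a (Z.to_nat (- a))).
  split; [|split].
  - apply (cardinal_equiv _ _ _ (cardinal_count_window _ 0 (Z.to_nat b))).
    intro i; unfold negs_right; split.
    + intros [Hi Hsi]. split; [lia|]. now destruct (s i).
    + intros [Hi Hsi]. split; [|now rewrite Hsi].
      destruct (Z_le_gt_dec i b) as [Hib|Hib]; [lia|].
      rewrite pos_above in Hsi by lia. discriminate.
  - apply (cardinal_equiv _ _ _ (cardinal_count_window _ a (Z.to_nat (- a)))).
    intro i; unfold pos_left; split.
    + intros [Hi Hsi]. split; auto. lia.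
    + intros [Hi Hsi]. pose proof (pos_site_gt i Hsi). split; auto. lia.
  - rewrite (count_upto_add s a 0 b) by lia.
    pose proof (count_window_negb s 0 (Z.to_nat b)).
    unfold count_upto. replace (0 - a) with (- a) by lia. replace (b - 0) with b by lia. lia.
Qed.

End Frame.

Lemma inB_frame s : inB s -> exists a b, a <= 0 /\ 1 <= b /\
  (forall y, y <= a -> s y = false) /\ (forall y, b <= y -> s y = true).
Proof.
  intros [a [b [Ha Hb]]]. exists (Z.min a 0), (Z.max b 1). repeat split; try lia.
  - intros y Hy. replace y with (a - Z.of_nat (Z.to_nat (a - y))) by lia. apply Ha.
  - intros y Hy. replace y with (b + Z.of_nat (Z.to_nat (y - b))) by lia. apply Hb.
Qed.

Lemma N_is_functional s n m : N_is s n -> N_is s m -> n = m.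
Proof.
  intros [k [l [Hk [Hl <-]]]] [k' [l' [Hk' [Hl' <-]]]].
  rewrite (cardinal_unicity _ _ _ Hk _ Hk'), (cardinal_unicity _ _ _ Hl _ Hl'). reflexivity.
Qed.

Lemma N_is_iff_eventual_shift s n : inB s ->
  N_is s n <-> exists R : nat, forall r, (R <= r)%nat -> S s r = Z.of_nat r + n.
Proof.
  intro HB. destruct (inB_frame s HB) as [a [b [Ha0 [Hb1 [Ha Hb]]]]].
  pose proof (N_is_frame s a b Ha Hb Ha0 Hb1) as HN.
  pose proof (S_beyond s a b Ha Hb ltac:(lia)) as Hbeyond.
  split.
  - intro Hn. rewrite (N_is_functional s n _ Hn HN).
    exists (count_upto s a b). exact Hbeyond.
  - intros [R HR].
    set (r := Nat.max R (count_upto s a b)).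
    pose proof (HR r ltac:(lia)). pose proof (Hbeyond r ltac:(lia)).
    replace n with (b - Z.of_nat (count_upto s a b)) by lia. exact HN.
Qed.

Lemma S_eq s r x : inB s -> is_S s r x -> S s r = x.
Proof.
  intro HB. destruct (inB_frame s HB) as [a [b [Ha0 [Hb1 [Ha Hb]]]]].
  apply (S_eq_frame s a); auto.
Qed.

Lemma S_succ_T n s r : inB s -> (1 <= r)%nat ->
  S s (r + 1) = S s r + Z.of_nat (T n s (- Z.of_nat r)) + 1.
Proof.
  intros HB Hr. destruct (inB_frame s HB) as [a [b [Ha0 [Hb1 [Ha Hb]]]]].
  pose proof (S_lt_succ s a b Ha Hb ltac:(lia) r Hr).
  unfold T. replace (- Z.of_nat r <? 0) with true by (symmetry; apply Z.ltb_lt; lia).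
  replace (Z.to_nat (- - Z.of_nat r)) with r by lia. lia.
Qed.

Lemma pos_site_iff_S s x : inB s -> s x = true <-> exists r, (1 <= r)%nat /\ S s r = x.
Proof.
  intro HB. destruct (inB_frame s HB) as [a [b [Ha0 [Hb1 [Ha Hb]]]]].
  split.
  - intro Hx. exists (count_upto s a x). exact (S_count_upto s a Ha x Hx).
  - intros [r [Hr <-]]. exact (proj1 (S_spec_frame s a b Ha Hb ltac:(lia) r Hr)).
Qed.

Lemma T_in_Omega n s : inBn n s -> inOmega (T n s).
Proof.
  intros [HB HN]. apply (N_is_iff_eventual_shift s n HB) in HN. destruct HN as [R HR].
  split.
  - intros i Hi. unfold T. now replace (i <? 0) with false by (symmetry; apply Z.ltb_ge; lia).
  - exists (Z.of_nat R + 1). split; [lia|]. intros i Hi.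
    unfold T. replace (- i <? 0) with true by (symmetry; apply Z.ltb_lt; lia). cbv zeta.
    rewrite !HR by lia. lia.
Qed.

Lemma T_injective n s1 s2 : inBn n s1 -> inBn n s2 -> T n s1 = T n s2 -> s1 = s2.
Proof.
  intros [HB1 HN1] [HB2 HN2] HT.
  apply (N_is_iff_eventual_shift _ n HB1) in HN1. destruct HN1 as [R1 HR1].
  apply (N_is_iff_eventual_shift _ n HB2) in HN2. destruct HN2 as [R2 HR2].
  (* Descend from the common tail S_r = r + n using S_r = S_(r+1) - T(-r) - 1. *)
  assert (HSk : forall k r, (1 <= r)%nat -> (Nat.max R1 R2 <= r + k)%nat -> S s1 r = S s2 r).
  { induction k as [|k IH]; intros r Hr Hk.
    - rewrite HR1, HR2 by lia. reflexivity.
    - pose proof (S_succ_T n s1 r HB1 Hr). pose proof (S_succ_T n s2 r HB2 Hr).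
      pose proof (IH (r + 1)%nat ltac:(lia) ltac:(lia)). rewrite HT in *. lia. }
  assert (HS : forall r, (1 <= r)%nat -> S s1 r = S s2 r)
    by (intros r Hr; apply (HSk (Nat.max R1 R2) r); lia).
  apply functional_extensionality; intro x.
  apply Bool.eq_true_iff_eq. rewrite (pos_site_iff_S s1 x HB1), (pos_site_iff_S s2 x HB2).
  split; intros [r [Hr <-]]; exists r; split; auto; now rewrite HS.
Qed.

Section IncreasingSites.

Variable q : nat -> Z.
Hypothesis q_incr : forall j, q j < q (j + 1).

Lemma q_spread i j : (i <= j)%nat -> q i + Z.of_nat (j - i) <= q j.
Proof.
  induction 1 as [|j Hij IH]; [rewrite Nat.sub_diag; lia|].
  pose proof (q_incr j). rewrite <- Nat.add_1_r. lia.
Qed.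

Lemma q_le_iff i j : q i <= q j <-> (i <= j)%nat.
Proof.
  split; intro H; [|pose proof (q_spread i j H); lia].
  destruct (Nat.le_gt_cases i j) as [Hij|Hji]; auto.
  pose proof (q_spread (j + 1) i ltac:(lia)). pose proof (q_incr j). lia.
Qed.

Definition sites_config : config :=
  fun x => existsb (fun j => x =? q j) (seq 0 (Z.to_nat (x - q 0) + 1)).

Lemma sites_config_spec x : sites_config x = true <-> exists j, x = q j.
Proof.
  unfold sites_config. rewrite existsb_exists. split.
  - intros [j [_ Hj]]. exists j. now apply Z.eqb_eq.
  - intros [j ->]. exists j. split; [|apply Z.eqb_refl].
    apply in_seq. pose proof (q_spread 0 j ltac:(lia)). lia.
Qed.

Lemma cardinal_sites_upto j :
  cardinal Z (fun i => i <= q j /\ sites_config i = true) (j + 1)%nat.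
Proof.
  induction j as [|j IH].
  - apply (cardinal_equiv _ _ _ (card_add _ _ _ (card_empty Z) (q 0) ltac:(intros []))).
    intro i; rewrite sites_config_spec; split.
    + intros [i' []|i' []]. split; [lia|]. now exists 0%nat.
    + intros [Hi [k ->]]. apply q_le_iff in Hi. replace k with 0%nat by lia. right. constructor.
  - rewrite Nat.add_succ_l, <- (Nat.add_1_r j).
    apply (cardinal_equiv _ _ _ (card_add _ _ _ IH (q (j + 1))
      ltac:(intros [Hj _]; pose proof (q_incr j); lia))).
    intro i; rewrite !sites_config_spec; split.
    + intros [i' [Hi Hsi]|i' []].
      * rewrite sites_config_spec in Hsi. pose proof (q_incr j). split; [lia|auto].
      * split; [lia|]. now exists (j + 1)%nat.
    + intros [Hi [k ->]]. apply q_le_iff in Hi.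
      destruct (Nat.eq_dec k (j + 1)) as [->|Hk]; [right|left].
      { constructor. }
      split; [apply q_le_iff; lia|apply sites_config_spec; now exists k].
Qed.

Lemma q_tail K : (forall j, (K <= j)%nat -> q (j + 1) = q j + 1) ->
  forall j, (K <= j)%nat -> q j = q K + Z.of_nat (j - K).
Proof.
  intros HK. induction 1 as [|j Hj IH]; [rewrite Nat.sub_diag; lia|].
  rewrite <- Nat.add_1_r, HK, IH by exact Hj. lia.
Qed.

Lemma sites_config_inB K : (forall j, (K <= j)%nat -> q (j + 1) = q j + 1) ->
  inB sites_config.
Proof.
  intro HK. exists (q 0 - 1), (q K). split; intro i.
  - destruct (sites_config (q 0 - 1 - Z.of_nat i)) eqn:E; auto.
    apply sites_config_spec in E as [j Hj]. pose proof (q_spread 0 j ltac:(lia)). lia.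
  - apply sites_config_spec. exists (K + i)%nat.
    rewrite (q_tail K HK (K + i)) by lia. lia.
Qed.

Lemma S_sites_config j : inB sites_config -> S sites_config (j + 1) = q j.
Proof.
  intro HB. apply S_eq; auto. split; [|apply cardinal_sites_upto].
  apply sites_config_spec. now exists j.
Qed.

End IncreasingSites.

Fixpoint gap_sites (w : Z -> nat) (c : Z) (j : nat) : Z :=
  match j with
  | O => c
  | Datatypes.S j' => gap_sites w c j' + Z.of_nat (w (- Z.of_nat (Datatypes.S j'))) + 1
  end.

Lemma gap_sites_succ w c j :
  gap_sites w c (j + 1) = gap_sites w c j + Z.of_nat (w (- Z.of_nat (j + 1))) + 1.
Proof. rewrite Nat.add_1_r. reflexivity. Qed.

Lemma gap_sites_shift w c j : gap_sites w c j = c + gap_sites w 0 j.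
Proof. induction j as [|j IH]; simpl gap_sites; lia. Qed.

Lemma T_surjective n w : inOmega w -> exists s, inBn n s /\ T n s = w.
Proof.
  intros [Hw0 [N [HN HwN]]].
  set (K := Z.to_nat N).
  set (q := gap_sites w (n + 1 + Z.of_nat K - gap_sites w 0 K)).
  assert (q_succ : forall j, q (j + 1)%nat = q j + Z.of_nat (w (- Z.of_nat (j + 1))) + 1)
    by (intro j; apply gap_sites_succ).
  assert (q_incr : forall j, q j < q (j + 1)%nat) by (intro j; rewrite q_succ; lia).
  assert (q_tail_step : forall j, (K <= j)%nat -> q (j + 1)%nat = q j + 1)
    by (intros j Hj; rewrite q_succ, HwN by lia; lia).
  assert (qK : q K = Z.of_nat K + 1 + n) by (unfold q; rewrite gap_sites_shift; lia).
  pose proof (sites_config_inB q q_incr K q_tail_step) as HB.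
  exists (sites_config q). split; [split; auto|].
  - apply (N_is_iff_eventual_shift _ n HB). exists (K + 1)%nat. intros r Hr.
    replace r with ((r - 1) + 1)%nat by lia.
    rewrite S_sites_config, (q_tail q K q_tail_step) by (auto; lia). lia.
  - apply functional_extensionality; intro i. unfold T.
    destruct (i <? 0) eqn:Hi; [|symmetry; apply Hw0, Z.ltb_ge, Hi].
    apply Z.ltb_lt in Hi. cbv zeta.
    replace (Z.to_nat (- i)) with ((Z.to_nat (- i) - 1) + 1)%nat by lia.
    rewrite !S_sites_config, q_succ by auto.
    replace (- Z.of_nat (Z.to_nat (- i) - 1 + 1)) with i by lia. lia.
Qed.

Theorem lemma3p2 (n : nat) :
  (forall s, inBn (Z.of_nat n) s -> inOmega (T (Z.of_nat n) s)) /\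
  (forall s1 s2, inBn (Z.of_nat n) s1 -> inBn (Z.of_nat n) s2 ->
     T (Z.of_nat n) s1 = T (Z.of_nat n) s2 -> s1 = s2) /\
  (forall w, inOmega w -> exists s, inBn (Z.of_nat n) s /\ T (Z.of_nat n) s = w).
Proof.
  split; [|split].
  - apply T_in_Omega.
  - apply T_injective.
  - apply T_surjective.
Qed.
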